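(* Let $K_f, M, B, P_m, P_f, k_{22}>0$, $B_f>0$, $I_m, I_f\ge 0$, $b_{22}\ge 0$ and $0\le\alpha\le 1$ be real numbers, and put $\mu=I_m/P_m$, $\nu=I_f/P_f$. Consider the two-port with hybrid matrix $H(s)=\begin{bmatrix} h_{11}&h_{12}\\ h_{21}&h_{22}\end{bmatrix}$ where $$h_{11}(s)=\frac{B_fMs^4+\big(B_f(B+P_m)+K_fM\big)s^3+\big(B_fI_m+K_f(B+P_m)\big)s^2+K_fI_ms}{a_4s^4+a_3s^3+a_2s^2+a_1s+a_0},$$ $$h_{12}(s)=\frac{B_fP_mP_fs^3+P_mP_f\big(K_f+B_f(\mu+\nu)\big)s^2+\big(B_fI_mI_f+K_fP_mP_f(\mu+\nu)\big)s+K_fI_mI_f}{a_4s^4+a_3s^3+a_2s^2+a_1s+a_0},$$ $h_{21}(s)=-1$, $h_{22}(s)=\dfrac{s}{b_{22}s+k_{22}}$, with $a_4=M$, $a_3=B+P_m+B_f(\alpha+P_mP_f)$, $a_2=I_m+K_f(\alpha+P_mP_f)+B_fP_mP_f(\mu+\nu)$, $a_1=B_fI_mI_f+K_fP_mP_f(\mu+\nu)$, $a_0=K_fI_mI_f$. Suppose that: the $h$-parameters have no poles in the open right half plane; any poles of the $h$-parameters on the imaginary axis are simple with real positive residues; and $\mathrm{Re}\,h_{11}(j\omega)\ge 0$ for all real $\omega$. If this two-port is absolutely stable, then $b_{22}>0$.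
   Context: This models a series damped elastic actuator (actuator inertia $M$, actuator damping $B$, physical spring $K_f$ in parallel with physical damper $B_f$) under velocity-sourced impedance control with PI motion controller gains $P_m,I_m$, PI force controller gains $P_f,I_f$, feed-forward parameter $\alpha$, and a virtual coupler consisting of a spring $k_{22}$ in parallel with a damper $b_{22}$. The hybrid matrix relates $(F_{\mathrm{int}},v_e)^T=H\,(-v_h,F_e)^T$. A two-port with hybrid matrix $H$ is called absolutely stable if (Llewellyn's criterion): (a) the $h$-parameters have no poles in the open right half plane; (b) any poles of the $h$-parameters on the imaginary axis are simple with real positive residues; (c) for all real $\omega$ (away from imaginary-axis poles), (i) $\mathrm{Re}\,h_{11}(j\omega)\ge 0$ and (ii) $2\,\mathrm{Re}\,h_{11}(j\omega)\,\mathrm{Re}\,h_{22}(j\omega)-\mathrm{Re}\big(h_{12}(j\omega)h_{21}(j\omega)\big)-\big|h_{12}(j\omega)h_{21}(j\omega)\big|\ge 0$. *)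

From HB Require Import structures.
From mathcomp Require Import all_boot all_order all_algebra.
From mathcomp Require Import complex.
Set Implicit Arguments. Unset Strict Implicit. Unset Printing Implicit Defensive.
Import Order.TTheory GRing.Theory Num.Theory.
Local Open Scope ring_scope.

Section Rational.
Variable R : rcfType.
Local Notation C := R[i].

(* A rational function given as numerator / denominator over C. *)
Definition ratf := ({poly C} * {poly C})%type.

Definition rnum (h : ratf) : {poly C} := h.1 %/ gcdp h.1 h.2.
Definition rden (h : ratf) : {poly C} := h.2 %/ gcdp h.1 h.2.

Definition reval (h : ratf) (s : C) : C := (rnum h).[s] / (rden h).[s].

Definition is_pole (h : ratf) (z : C) : Prop := root (rden h) z.

Definition simple_pole (h : ratf) (z : C) : Prop :=
  root (rden h) z /\ ~~ root (rden h)^`() z.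

(* Residue of h at a simple pole z : lim_{s->z} (s - z) h(s) = N(z)/D'(z). *)
Definition residue_simple (h : ratf) (z : C) : C :=
  (rnum h).[z] / ((rden h)^`()).[z].

Definition jw (w : R) : C := Complex 0 w.

Record hybrid := Hybrid { h11 : ratf; h12 : ratf; h21 : ratf; h22 : ratf }.

Definition hparams (H : hybrid) : seq ratf := [:: h11 H; h12 H; h21 H; h22 H].

Definition llew_a (H : hybrid) : Prop :=
  forall h, h \in hparams H -> forall z : C, is_pole h z -> ~ (0 < complex.Re z).

Definition llew_b (H : hybrid) : Prop :=
  forall h, h \in hparams H -> forall z : C, is_pole h z -> complex.Re z = 0 ->
    simple_pole h z /\ complex.Im (residue_simple h z) = 0
    /\ 0 < complex.Re (residue_simple h z).

Definition not_axis_pole (H : hybrid) (w : R) : Prop :=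
  forall h, h \in hparams H -> ~ is_pole h (jw w).

Definition llew_ci (H : hybrid) : Prop :=
  forall w : R, not_axis_pole H w -> 0 <= complex.Re (reval (h11 H) (jw w)).

Definition llew_cii (H : hybrid) : Prop :=
  forall w : R, not_axis_pole H w ->
    let p := reval (h12 H) (jw w) * reval (h21 H) (jw w) in
    0 <= 2 * complex.Re (reval (h11 H) (jw w)) * complex.Re (reval (h22 H) (jw w))
         - complex.Re p - complex.Re `|p|.

Definition absolutely_stable (H : hybrid) : Prop :=
  [/\ llew_a H, llew_b H, llew_ci H & llew_cii H].

Definition cst (x : R) : {poly C} := (x%:C)%C%:P.

Definition sea_hybrid (Kf M B Bf Pm Pf Im If alpha k22 b22 : R) : hybrid :=
  let mu := Im / Pm in
  let nu := If / Pf in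
  let a4 := M in
  let a3 := B + Pm + Bf * (alpha + Pm * Pf) in
  let a2 := Im + Kf * (alpha + Pm * Pf) + Bf * Pm * Pf * (mu + nu) in
  let a1 := Bf * Im * If + Kf * Pm * Pf * (mu + nu) in
  let a0 := Kf * Im * If in
  let den := cst a4 * 'X^4 + cst a3 * 'X^3 + cst a2 * 'X^2 + cst a1 * 'X + cst a0 in
  let n11 := cst (Bf * M) * 'X^4 + cst (Bf * (B + Pm) + Kf * M) * 'X^3
             + cst (Bf * Im + Kf * (B + Pm)) * 'X^2 + cst (Kf * Im) * 'X in
  let n12 := cst (Bf * Pm * Pf) * 'X^3 + cst (Pm * Pf * (Kf + Bf * (mu + nu))) * 'X^2
             + cst (Bf * Im * If + Kf * Pm * Pf * (mu + nu)) * 'X + cst (Kf * Im * If) in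
  Hybrid (n11, den) (n12, den) (- 1, 1) ('X, cst b22 * 'X + cst k22).

End Rational.

From HB Require Import structures.
From mathcomp Require Import all_boot all_order all_algebra.
From mathcomp Require Import complex polyrcf ring lra.
Import Order.TTheory GRing.Theory Num.Theory.
Local Open Scope ring_scope.

(* If b22 = 0 the virtual coupler is a pure spring, so h22(jw) = jw/k22 is purely
   imaginary and condition (c)(ii) degenerates to Re p + |p| <= 0 for
   p = h12 h21 = -h12: h12(jw) would have to be real at every regular frequency.
   But Im h12(jw) |D(jw)|^2 is a real polynomial in w of degree 7 with leading
   coefficient -Bf Pm Pf M <> 0, so it does not vanish beyond its Cauchy bound. *)

Section Llewellyn.

Variable R : rcfType.

Lemma Im_eq0_of_Re_add_norm_le0 (z : R[i]) :
  complex.Re z + complex.Re `|z| <= 0 -> complex.Im z = 0.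
Proof.
case: z => x y; rewrite normc_def /= => sum_le0.
have s_ge0 : 0 <= Num.sqrt (x ^+ 2 + y ^+ 2) by exact: sqrtr_ge0.
have s_sq : Num.sqrt (x ^+ 2 + y ^+ 2) ^+ 2 = x ^+ 2 + y ^+ 2.
  by rewrite sqr_sqrtr // addr_ge0 // sqr_ge0.
by apply/eqP; rewrite -sqrf_eq0 eq_le sqr_ge0 andbT; nra.
Qed.

Lemma Im_divc (a b c d : R) :
  complex.Im ((a +i* b) / (c +i* d))%C = (b * c - a * d) / (c ^+ 2 + d ^+ 2).
Proof. by rewrite /=; ring. Qed.

Lemma horner_cubic_jw (c3 c2 c1 c0 w : R) :
  (cst c3 * 'X^3 + cst c2 * 'X^2 + cst c1 * 'X + cst c0).[jw w]
  = Complex (c0 - c2 * w ^+ 2) (c1 * w - c3 * w ^+ 3).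
Proof. by rewrite /cst !hornerE /=; congr Complex; ring. Qed.

Lemma horner_quartic_jw (c4 c3 c2 c1 c0 w : R) :
  (cst c4 * 'X^4 + cst c3 * 'X^3 + cst c2 * 'X^2 + cst c1 * 'X + cst c0).[jw w]
  = Complex (c4 * w ^+ 4 - c2 * w ^+ 2 + c0) (c1 * w - c3 * w ^+ 3).
Proof. by rewrite /cst !hornerE /=; congr Complex; ring. Qed.

Lemma horner_linear_jw (c1 c0 w : R) :
  (cst c1 * 'X + cst c0).[jw w] = Complex c0 (c1 * w).
Proof. by rewrite /cst !hornerE /=; congr Complex; ring. Qed.

Lemma exists_nonroot {p : {poly R}} : p != 0 -> exists w, p.[w] != 0.
Proof.
by move=> p_neq0; exists (cauchy_bound p); apply: ge_cauchy_bound; rewrite ?in_itv /= ?lexx.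
Qed.

Lemma horner_rnum (N D : {poly R[i]}) (s : R[i]) :
  N.[s] = (rnum (N, D)).[s] * (gcdp N D).[s].
Proof. by rewrite -hornerM /rnum /= divpK // dvdp_gcdl. Qed.

Lemma horner_rden (N D : {poly R[i]}) (s : R[i]) :
  D.[s] = (rden (N, D)).[s] * (gcdp N D).[s].
Proof. by rewrite -hornerM /rden /= divpK // dvdp_gcdr. Qed.

Lemma not_pole_horner_den (N D : {poly R[i]}) (s : R[i]) :
  D.[s] != 0 -> ~ is_pole (N, D) s.
Proof. by rewrite /is_pole rootE (horner_rden N D s) mulf_eq0 negb_or => /andP[/negP]. Qed.

Lemma reval_horner (N D : {poly R[i]}) (s : R[i]) :
  D.[s] != 0 -> reval (N, D) s = N.[s] / D.[s].
Proof.
rewrite /reval (horner_rden N D s) (horner_rnum N D s) mulf_eq0 negb_or => /andP[_ g_neq0].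
by rewrite invfM mulrACA divff // mulr1.
Qed.

Lemma exists_jw_nonreal_ratio {b3 a4 : R} (b2 b1 b0 a3 a2 a1 a0 : R) :
  b3 != 0 -> a4 != 0 ->
  let N := cst b3 * 'X^3 + cst b2 * 'X^2 + cst b1 * 'X + cst b0 in
  let D := cst a4 * 'X^4 + cst a3 * 'X^3 + cst a2 * 'X^2 + cst a1 * 'X + cst a0 in
  exists w, D.[jw w] != 0 /\ complex.Im (N.[jw w] / D.[jw w]) != 0.
Proof.
move=> b3_neq0 a4_neq0 N D.
(* [P.[w]] is the numerator of [Im (N/D)(jw)], namely [Im N(jw) Re D(jw) - Re N(jw) Im D(jw)]. *)
pose P : {poly R} := (- (b3 * a4))%:P * 'X^7 + (b1 * a4 + b3 * a2 - b2 * a3)%:P * 'X^5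
  + (- (b1 * a2) - b3 * a0 + b0 * a3 + b2 * a1)%:P * 'X^3 + (b1 * a0 - b0 * a1)%:P * 'X.
have P_neq0 : P != 0.
  apply: contraTneq (mulf_neq0 b3_neq0 a4_neq0) => /(congr1 (coefp 7)).
  rewrite /= !coefD !coefCM !coefXn !coefX coef0 /= !mulr0 !addr0 mulr1.
  by move/eqP; rewrite oppr_eq0 => ->.
have [w Pw_neq0] := exists_nonroot P_neq0.
exists w; rewrite /N /D horner_cubic_jw horner_quartic_jw Im_divc.
set ReN := b0 - _; set ImN := b1 * w - _; set ReD := _ + a0; set ImD := a1 * w - _.
have ePw : P.[w] = ImN * ReD - ReN * ImD.
  by rewrite /P !(hornerD, hornerCM, hornerXn, hornerX) /ImN /ReD /ReN /ImD; ring.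
rewrite ePw in Pw_neq0.
have D_neq0 : ~~ ((ReD == 0) && (ImD == 0)).
  by apply: contra Pw_neq0 => /andP[/eqP-> /eqP->]; rewrite !mulr0 subrr.
split; first by rewrite eq_complex.
by rewrite mulf_neq0 // invr_neq0 // paddr_eq0 ?sqr_ge0 // !sqrf_eq0.
Qed.

Lemma llew_cii_Im_h12h21 {H : hybrid R} {w : R} :
  llew_cii H -> not_axis_pole H w -> complex.Re (reval (h22 H) (jw w)) = 0 ->
  complex.Im (reval (h12 H) (jw w) * reval (h21 H) (jw w)) = 0.
Proof.
move=> cii w_regular Re_h22; apply: Im_eq0_of_Re_add_norm_le0.
by move: (cii w w_regular); rewrite /= Re_h22 mulr0; lra.
Qed.

Lemma not_llew_cii_spring_coupler {n11 : {poly R[i]}} {b3 b2 b1 b0 a4 a3 a2 a1 a0 k : R} :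
  0 < k -> b3 != 0 -> a4 != 0 ->
  let N := cst b3 * 'X^3 + cst b2 * 'X^2 + cst b1 * 'X + cst b0 in
  let D := cst a4 * 'X^4 + cst a3 * 'X^3 + cst a2 * 'X^2 + cst a1 * 'X + cst a0 in
  ~ llew_cii (Hybrid (n11, D) (N, D) (-1, 1) ('X, cst 0 * 'X + cst k)).
Proof.
move=> k_gt0 b3_neq0 a4_neq0 N D cii.
have [w [Dw_neq0 Im_h12]] := exists_jw_nonreal_ratio b2 b1 b0 a3 a2 a1 a0 b3_neq0 a4_neq0.
have kw_neq0 : (cst 0 * 'X + cst k).[jw w] != 0.
  by rewrite horner_linear_jw eq_complex negb_and gt_eqF.
have one_neq0 : (1 : {poly R[i]}).[jw w] != 0 by rewrite hornerC oner_eq0.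
have w_regular : not_axis_pole (Hybrid (n11, D) (N, D) (-1, 1) ('X, cst 0 * 'X + cst k)) w.
  by move=> h; rewrite !inE => /or4P[] /eqP -> /=; exact: not_pole_horner_den.
have Re_h22 : complex.Re (reval ('X, cst 0 * 'X + cst k) (jw w)) = 0.
  by rewrite reval_horner // horner_linear_jw hornerX /= !(mul0r, mulr0, oppr0, subr0).
move: (llew_cii_Im_h12h21 cii w_regular Re_h22) => /=.
rewrite !reval_horner // hornerN !hornerC divr1 mulrN1.
by case: (_ / _) Im_h12 => x y /= y_neq0 /eqP; rewrite oppr_eq0 (negPf y_neq0).
Qed.

End Llewellyn.

Theorem lemma6 (R : rcfType) (Kf M B Bf Pm Pf Im If alpha k22 b22 : R) :
  0 < Kf -> 0 < M -> 0 < B -> 0 < Pm -> 0 < Pf -> 0 < k22 -> 0 < Bf ->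
  0 <= Im -> 0 <= If -> 0 <= b22 -> 0 <= alpha -> alpha <= 1 ->
  let H := sea_hybrid Kf M B Bf Pm Pf Im If alpha k22 b22 in
  llew_a H -> llew_b H -> llew_ci H ->
  absolutely_stable H -> 0 < b22.
Proof.
move=> _ M_gt0 _ Pm_gt0 Pf_gt0 k22_gt0 Bf_gt0 _ _ b22_ge0 _ _ H _ _ _ [_ _ _ cii].
rewrite lt0r b22_ge0 andbT; apply/negP => /eqP b22_0.
have BfPmPf_neq0 : Bf * Pm * Pf != 0 by rewrite !mulf_neq0 // gt_eqF.
have M_neq0 : M != 0 by rewrite gt_eqF.
move: cii; rewrite /H /sea_hybrid /= b22_0.
exact: not_llew_cii_spring_coupler k22_gt0 BfPmPf_neq0 M_neq0.
Qed.
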